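(* Let $\mathcal H_1,\mathcal H_2$ be Hilbert spaces with unitaries $U_1\in B(\mathcal H_1)$, $U_2\in B(\mathcal H_2)$, and let $\phi:B(\mathcal H_1)\to B(\mathcal H_2)$ be a linear map such that for all $V\in B(\mathcal H_1)$, $$\phi(U_1^*V)=U_2^*\phi(V)\quad\text{and}\quad\phi(U_1V)=U_2\phi(V).$$ Then $\phi$ is completely positive if and only if $\phi$ is $(U_1,U_2)$-CP.
   Context: An operator $V$ on a Hilbert space with a given unitary $U$ is $U$-positive if $U^*V\ge0$. For $l\in\mathbb N$, $U^l=\mathrm{diag}(U,\dots,U)$ acting on $\mathcal H^l$. A linear map $\phi:B(\mathcal H_1)\to B(\mathcal H_2)$ is $(U_1,U_2)$-CP if for every $l\in\mathbb N$ and every $V=[V_{ij}]\in M_l(B(\mathcal H_1))$ with $(U_1^l)^*V\ge0$, one has $(U_2^l)^*[\phi(V_{ij})]\ge0$. *)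

From mathcomp Require Import all_boot all_order all_algebra.
From mathcomp Require Import reals complex.
Set Implicit Arguments. Unset Strict Implicit. Unset Printing Implicit Defensive.
Import Order.TTheory GRing.Theory Num.Theory.
Local Open Scope ring_scope.

Section Hilbert.
Variable R : realType.
Local Notation C := R[i].
Variable V : lmodType C.
Variable ip : V -> V -> C.  (* inner product, linear in the first argument *)

Definition cauchy_seq (u : nat -> V) : Prop :=
  forall e : C, 0 < e -> exists N : nat, forall m n : nat,
    (N <= m)%N -> (N <= n)%N -> `|ip (u m - u n) (u m - u n)| < e.

Definition converges_to (u : nat -> V) (l : V) : Prop :=
  forall e : C, 0 < e -> exists N : nat, forall n : nat,
    (N <= n)%N -> `|ip (u n - l) (u n - l)| < e.

Definition is_hilbert : Prop :=
  [/\ (forall (a : C) (x y z : V), ip (a *: x + y) z = a * ip x z + ip y z),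
      (forall x y : V, ip y x = (ip x y)^*),
      (forall x : V, 0 <= ip x x),
      (forall x : V, ip x x = 0 -> x = 0) &
      (forall u : nat -> V, cauchy_seq u -> exists l, converges_to u l)].

Definition bounded_op (T : V -> V) : Prop :=
  (forall (a : C) (x y : V), T (a *: x + y) = a *: T x + T y) /\
  exists M : C, 0 <= M /\ forall x : V, `|ip (T x) (T x)| <= M * `|ip x x|.

Definition is_adjoint (T Ts : V -> V) : Prop :=
  forall x y : V, ip (T x) y = ip x (Ts y).

Definition unitary (U Us : V -> V) : Prop :=
  [/\ bounded_op U, is_adjoint U Us, Us \o U =1 id & U \o Us =1 id].

(* An operator matrix [A i j] in M_l(B(H)), acting on H^l, is positive *)
Definition opmx_pos (l : nat) (A : 'I_l -> 'I_l -> V -> V) : Prop :=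
  forall x : 'I_l -> V, 0 <= \sum_(i < l) ip (\sum_(j < l) A i j (x j)) (x i).

Definition opmx_in_B (l : nat) (A : 'I_l -> 'I_l -> V -> V) : Prop :=
  forall i j, bounded_op (A i j).

End Hilbert.

Section Maps.
Variable R : realType.
Local Notation C := R[i].
Variables (V1 V2 : lmodType C) (ip1 : V1 -> V1 -> C) (ip2 : V2 -> V2 -> C).

(* phi : B(H1) -> B(H2) is a linear map (phi is only constrained on B(H1)) *)
Definition linear_map_B (phi : (V1 -> V1) -> (V2 -> V2)) : Prop :=
  (forall T, bounded_op ip1 T -> bounded_op ip2 (phi T)) /\
  (forall (a : C) (S T : V1 -> V1), bounded_op ip1 S -> bounded_op ip1 T ->
     phi (fun x => a *: S x + T x) =1 (fun y => a *: phi S y + phi T y)).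

Definition completely_positive (phi : (V1 -> V1) -> (V2 -> V2)) : Prop :=
  forall (l : nat) (A : 'I_l -> 'I_l -> V1 -> V1),
    opmx_in_B ip1 A -> opmx_pos ip1 A ->
    opmx_pos ip2 (fun i j => phi (A i j)).

(* (U1,U2)-CP, where U1s, U2s are the adjoints U1^*, U2^*:
   (U1^l)^* [A i j] = [U1^* A i j] >= 0  implies  (U2^l)^* [phi (A i j)] >= 0 *)
Definition U_CP (U1s : V1 -> V1) (U2s : V2 -> V2)
    (phi : (V1 -> V1) -> (V2 -> V2)) : Prop :=
  forall (l : nat) (A : 'I_l -> 'I_l -> V1 -> V1),
    opmx_in_B ip1 A -> opmx_pos ip1 (fun i j => U1s \o A i j) ->
    opmx_pos ip2 (fun i j => U2s \o phi (A i j)).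

End Maps.

From mathcomp Require Import all_boot all_order all_algebra.
From mathcomp Require Import reals complex.
Import GRing.Theory Num.Theory.
Local Open Scope ring_scope.

Section Operators.
Context {R : realType} {V : lmodType R[i]} {ip : V -> V -> R[i]}.

Lemma opmx_pos_eq {l : nat} (A B : 'I_l -> 'I_l -> V -> V) :
  (forall i j, A i j =1 B i j) -> opmx_pos ip A -> opmx_pos ip B.
Proof.
move=> eqAB posA x; have := posA x.
suff -> : \sum_(i < l) ip (\sum_(j < l) A i j (x j)) (x i)
        = \sum_(i < l) ip (\sum_(j < l) B i j (x j)) (x i) by [].
by apply: eq_bigr => i _; congr (ip _ _); apply: eq_bigr => j _; apply: eqAB.
Qed.

Lemma bounded_op_comp_isometry (W T : V -> V) :
  (forall (a : R[i]) x y, W (a *: x + y) = a *: W x + W y) ->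
  (forall x, ip (W x) (W x) = ip x x) ->
  bounded_op ip T -> bounded_op ip (W \o T).
Proof.
move=> linW isoW [linT [M [M_ge0 boundT]]]; split.
  by move=> a x y /=; rewrite linT linW.
by exists M; split => // x /=; rewrite isoW.
Qed.

Section Unitary.
Context {U Us : V -> V}.
Hypothesis unitaryU : unitary ip U Us.

Lemma unitary_isometry x : ip (U x) (U x) = ip x x.
Proof. by have [_ adjU UsK _] := unitaryU; rewrite adjU (UsK x : Us (U x) = x). Qed.

Lemma unitary_adj_linear (a : R[i]) x y : Us (a *: x + y) = a *: Us x + Us y.
Proof.
have [[linU _] _ UsK UK] := unitaryU.
rewrite -{1}(UK x : U (Us x) = x) -{1}(UK y : U (Us y) = y) -linU.
exact: UsK.
Qed.

Lemma unitary_adj_isometry x : ip (Us x) (Us x) = ip x x.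
Proof. by have [_ adjU _ UK] := unitaryU; rewrite -adjU (UK x : U (Us x) = x). Qed.

Lemma bounded_op_comp_unitary {T} : bounded_op ip T -> bounded_op ip (U \o T).
Proof.
have [[linU _] _ _ _] := unitaryU.
exact: bounded_op_comp_isometry linU unitary_isometry.
Qed.

Lemma bounded_op_comp_unitary_adj {T} : bounded_op ip T -> bounded_op ip (Us \o T).
Proof. exact: bounded_op_comp_isometry unitary_adj_linear unitary_adj_isometry. Qed.

End Unitary.
End Operators.

Section Covariance.
Context {R : realType} {V1 V2 : lmodType R[i]}.
Context {ip1 : V1 -> V1 -> R[i]} {ip2 : V2 -> V2 -> R[i]}.
Context {U1 U1s : V1 -> V1} {U2 U2s : V2 -> V2}.
Hypotheses (unitaryU1 : unitary ip1 U1 U1s) (unitaryU2 : unitary ip2 U2 U2s).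
Context {phi : (V1 -> V1) -> (V2 -> V2)}.
Hypothesis phi_adjU : forall T, bounded_op ip1 T -> phi (U1s \o T) =1 U2s \o phi T.
Hypothesis phi_U : forall T, bounded_op ip1 T -> phi (U1 \o T) =1 U2 \o phi T.

Lemma completely_positive_U_CP :
  completely_positive ip1 ip2 phi -> U_CP ip1 ip2 U1s U2s phi.
Proof.
move=> cp l A boundA posUsA.
have boundUsA : opmx_in_B ip1 (fun i j => U1s \o A i j).
  by move=> i j; exact: (bounded_op_comp_unitary_adj unitaryU1 (boundA i j)).
apply: opmx_pos_eq (cp l _ boundUsA posUsA) => i j.
exact: phi_adjU.
Qed.

Lemma U_CP_completely_positive :
  U_CP ip1 ip2 U1s U2s phi -> completely_positive ip1 ip2 phi.
Proof.
have [_ _ U1sK _] := unitaryU1; have [_ _ U2sK _] := unitaryU2.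
move=> ucp l A boundA posA.
have boundUA : opmx_in_B ip1 (fun i j => U1 \o A i j).
  by move=> i j; exact: (bounded_op_comp_unitary unitaryU1 (boundA i j)).
have posUsUA : opmx_pos ip1 (fun i j => U1s \o (U1 \o A i j)).
  by apply: opmx_pos_eq posA => i j x; rewrite /= (U1sK _ : U1s (U1 _) = _).
apply: opmx_pos_eq (ucp l _ boundUA posUsUA) => i j x /=.
by rewrite (phi_U _ (boundA i j) x) (U2sK _ : U2s (U2 _) = _).
Qed.

End Covariance.

Theorem theorem2p3 (R : realType) (V1 V2 : lmodType R[i])
    (ip1 : V1 -> V1 -> R[i]) (ip2 : V2 -> V2 -> R[i])
    (hH1 : is_hilbert ip1) (hH2 : is_hilbert ip2)
    (U1 U1s : V1 -> V1) (U2 U2s : V2 -> V2)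
    (hU1 : unitary ip1 U1 U1s) (hU2 : unitary ip2 U2 U2s)
    (phi : (V1 -> V1) -> (V2 -> V2))
    (hphi : linear_map_B ip1 ip2 phi)
    (hcov1 : forall T : V1 -> V1, bounded_op ip1 T ->
               phi (U1s \o T) =1 U2s \o phi T)
    (hcov2 : forall T : V1 -> V1, bounded_op ip1 T ->
               phi (U1 \o T) =1 U2 \o phi T) :
  completely_positive ip1 ip2 phi <-> U_CP ip1 ip2 U1s U2s phi.
Proof.
split.
- exact: (completely_positive_U_CP hU1 hcov1).
- exact: (U_CP_completely_positive hU1 hU2 hcov2).
Qed.
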